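(* In the setting below, suppose $X_0$ is almost surely constant, $\mathbb{P}(A_1\ne a_1)>0$, and for some $s\in\{1,\dots,t\}$ we have $\mathbb{P}(X_s(A_{1:s})=x_s)=0$ for all $x_s\in\mathcal{X}_s$. Then measurable $\underline g,\overline g:\mathcal{X}_{0:t}\to\mathbb{R}$ are permissible bounds only if they are trivial, i.e. only if $\underline g(X_{0:t}(a_{1:t}))\le\underline y(X_{0:t}(a_{1:t}))$ and $\overline g(X_{0:t}(a_{1:t}))\ge\overline y(X_{0:t}(a_{1:t}))$ almost surely.
   Context: Horizon $T\ge1$, $\mathcal{X}_t=\mathbb{R}^{d_t}$, finite action spaces $\mathcal{A}_t$; potential outcomes $X_0$, $X_r(a'_{1:r})\in\mathcal{X}_r$, random actions $A_{1:T}$ ($A_r\in\mathcal{A}_r$), and real-valued potential outcomes $Y(a'_{1:t})$, all defined jointly; $X_{0:t}(a_{1:t})=(X_0,X_1(a_1),\dots,X_t(a_{1:t}))$, and quantities evaluated at $A$ denote the potential outcome indexed by the realized actions. Fix $t\in\{1,\dots,T\}$, $a_{1:t}\in\mathcal{A}_{1:t}$, and measurable $\underline y,\overline y:\mathcal{X}_{0:t}\to\mathbb{R}$ with $\underline y(X_{0:t}(a_{1:t}))\le Y(a_{1:t})\le\overline y(X_{0:t}(a_{1:t}))$ almost surely. A pair $\underline g,\overline g:\mathcal{X}_{0:t}\to\mathbb{R}$ is permissible if, for every family of potential outcomes and actions $(\tilde X_{0:T}(a'_{1:T}),\tilde Y(a'_{1:t}),\tilde A_{1:T}:a'_{1:T}\in\mathcal{A}_{1:T})$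 with $\mathrm{Law}[\tilde X_{0:T}(\tilde A_{1:T}),\tilde A_{1:T},\tilde Y(\tilde A_{1:t})]=\mathrm{Law}[X_{0:T}(A_{1:T}),A_{1:T},Y(A_{1:t})]$ and $\underline y(\tilde X_{0:t}(a_{1:t}))\le\tilde Y(a_{1:t})\le\overline y(\tilde X_{0:t}(a_{1:t}))$ a.s., it holds that $\underline g(\tilde X_{0:t}(a_{1:t}))\le\mathbb{E}[\tilde Y(a_{1:t})\mid\tilde X_{0:t}(a_{1:t})]\le\overline g(\tilde X_{0:t}(a_{1:t}))$ almost surely. *)

From HB Require Import structures.
From mathcomp Require Import all_boot all_algebra.
From mathcomp Require Import all_classical all_reals all_analysis.

Set Implicit Arguments.
Unset Strict Implicit.
Unset Printing Implicit Defensive.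

Import GRing.Theory Num.Theory.
Local Open Scope classical_set_scope.
Local Open Scope ring_scope.

(* Conventions:
   - time is a nat; actions are encoded as natural numbers, the action space
     at time r being the finite set [Aset r : seq nat];
   - an action sequence is a map [alpha : nat -> nat], [alpha r] being the
     action at time r (r >= 1; [alpha 0] is ignored);
   - X_r(a'_{1:r}) is [X r (pre a' r)], with values in R^{dims r}
     represented as [(dims r).-tuple R] (product Borel sigma-algebra);
   - X_{0:t} lives in R^{d_0} x ... x R^{d_t}, represented by the
     concatenation in R^{d_0 + ... + d_t}. *)

Definition pre (alpha : nat -> nat) (r : nat) : r.-tuple nat :=
  [tuple alpha i.+1 | i < r].

Fixpoint dsum (dims : nat -> nat) (t : nat) : nat :=
  match t with
  | 0 => dims 0
  | t'.+1 => (dsum dims t' + dims t'.+1)%N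
  end.

Fixpoint traj (R : Type) (dims : nat -> nat) (Omega : Type)
    (X : forall r, r.-tuple nat -> Omega -> (dims r).-tuple R)
    (alpha : nat -> nat) (t : nat) (w : Omega) : (dsum dims t).-tuple R :=
  match t return (dsum dims t).-tuple R with
  | 0 => X 0 (pre alpha 0) w
  | t'.+1 => cat_tuple (traj X alpha t' w) (X t'.+1 (pre alpha t'.+1) w)
  end.

Definition obs (R : Type) (dims : nat -> nat) (Omega : Type)
    (X : forall r, r.-tuple nat -> Omega -> (dims r).-tuple R)
    (A : Omega -> nat -> nat) (Y : forall t, t.-tuple nat -> Omega -> R)
    (T t : nat) (w : Omega) : (T.-tuple nat * (dsum dims T).-tuple R * R) :=
  (pre (A w) T, traj X (A w) T w, Y t (pre (A w) t) w).

Definition po_measurable (R : realType) (dims : nat -> nat)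
    (d : measure_display) (Omega : measurableType d)
    (X : forall r, r.-tuple nat -> Omega -> (dims r).-tuple R)
    (A : Omega -> nat -> nat) (Y : forall t, t.-tuple nat -> Omega -> R) :=
  [/\ (forall r (al : r.-tuple nat), measurable_fun setT (X r al)),
      (forall r, measurable_fun setT (fun w => A w r)) &
      (forall t (al : t.-tuple nat), measurable_fun setT (Y t al))].

Definition actions_in (Omega : Type) (Aset : nat -> seq nat) (T : nat)
    (A : Omega -> nat -> nat) :=
  forall w r, (1 <= r <= T)%N -> A w r \in Aset r.

Definition same_law (R : realType) (dV : measure_display) (V : measurableType dV)
    (d : measure_display) (Omega : measurableType d) (P : probability Omega R)
    (d' : measure_display) (Omega' : measurableType d') (P' : probability Omega' R)
    (Z : Omega -> V) (Z' : Omega' -> V) :=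
  forall B : set V, measurable B -> P (Z @^-1` B) = P' (Z' @^-1` B).

Definition cexp_version (R : realType) (d : measure_display)
    (Omega : measurableType d) (P : probability Omega R)
    (dV : measure_display) (V : measurableType dV)
    (Y : Omega -> R) (Z : Omega -> V) (h : V -> R) :=
  [/\ measurable_fun setT h,
      P.-integrable setT (EFin \o Y),
      P.-integrable setT (EFin \o (h \o Z)) &
      forall B : set V, measurable B ->
        (\int[P]_(w in Z @^-1` B) (Y w)%:E =
         \int[P]_(w in Z @^-1` B) (h (Z w))%:E)%E].

Definition permissible (R : realType) (dims : nat -> nat) (T t : nat)
    (Aset : nat -> seq nat) (a : nat -> nat)
    (d : measure_display) (Omega : measurableType d) (P : probability Omega R)
    (X : forall r, r.-tuple nat -> Omega -> (dims r).-tuple R)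
    (A : Omega -> nat -> nat) (Y : forall t, t.-tuple nat -> Omega -> R)
    (ylo yup glo gup : (dsum dims t).-tuple R -> R) : Prop :=
  forall (d' : measure_display) (Omega' : measurableType d')
         (P' : probability Omega' R)
         (X' : forall r, r.-tuple nat -> Omega' -> (dims r).-tuple R)
         (A' : Omega' -> nat -> nat) (Y' : forall t, t.-tuple nat -> Omega' -> R),
    po_measurable X' A' Y' ->
    actions_in Aset T A' ->
    same_law P P' (obs X A Y T t) (obs X' A' Y' T t) ->
    {ae P', forall w, ylo (traj X' a t w) <= Y' t (pre a t) w
                      <= yup (traj X' a t w)} ->
    forall h : (dsum dims t).-tuple R -> R,
      cexp_version P' (Y' t (pre a t)) (traj X' a t) h ->
      {ae P', forall w, glo (traj X' a t w) <= h (traj X' a t w)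
                        <= gup (traj X' a t w)}.

(* Fix a unit w0 carrying the almost sure value of X_0, let z0 := X_{0:t}(a_{1:t})(w0)
   and pick any v with ylo z0 <= v <= yup z0.  The potential outcomes along a_{1:t} of
   the units with A_1 <> a_1 are never observed, so they may be redefined as
   X'_{0:t}(a_{1:t}) = z0 and Y'(a_{1:t}) = v without changing the law of the observed
   data and without violating ylo <= Y' <= yup.  Since X_s(A_{1:s}) has no atom, the
   units that do follow a_{1:t} and reach z0 form a null set, hence
   E[Y'(a_{1:t}) | X'_{0:t}(a_{1:t})] = v on the event {X'_{0:t}(a_{1:t}) = z0}, which
   has positive probability as it contains {A_1 <> a_1}.  Permissible bounds must thus
   satisfy glo z0 <= v <= gup z0; now take v = ylo z0 and v = yup z0. *)

From HB Require Import structures.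
From mathcomp Require Import all_boot all_order all_algebra.
From mathcomp Require Import all_classical all_reals all_analysis.
From mathcomp Require Import measurable_realfun.
Import Order.TTheory GRing.Theory Num.Theory.
Local Open Scope classical_set_scope.
Local Open Scope ring_scope.

Section measurable_tuple.
Context d (Omega : measurableType d) dT (T : measurableType dT).

Lemma measurable_fun_cat_tuple m n (f : Omega -> m.-tuple T)
    (g : Omega -> n.-tuple T) :
  measurable_fun setT f -> measurable_fun setT g ->
  measurable_fun setT (fun w => cat_tuple (f w) (g w)).
Proof.
move=> /measurable_fun_tnthP mf /measurable_fun_tnthP mg.
apply/measurable_fun_tnthP => i; case: (splitP i) => [j|k] ij.
- rewrite (_ : i = lshift n j); last exact: val_inj.
  rewrite (_ : _ \o _ = fun w => tnth (f w) j); first exact: mf.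
  by apply/funext => w /=; rewrite tnth_lshift.
- rewrite (_ : i = rshift m k); last exact: val_inj.
  rewrite (_ : _ \o _ = fun w => tnth (g w) k); first exact: mg.
  by apply/funext => w /=; rewrite tnth_rshift.
Qed.

Hypothesis measurable_set1T : forall y : T, measurable [set y].

Lemma measurable_tuple_set1 {n} (x : n.-tuple T) : measurable [set x].
Proof.
have -> : [set x] =
    \bigcap_(i in [set: 'I_n]) ((fun y => tnth y i) @^-1` [set tnth x i]).
  apply/seteqP; split => [y -> //|y /= yx].
  by apply: eq_from_tnth => i; exact: yx.
apply: fin_bigcap_measurable; first exact: finite_finset.
by move=> i _; rewrite -[X in measurable X]setTI; exact: measurable_tnth.
Qed.

Lemma measurable_eq_tuple n (f : Omega -> n.-tuple T) x :
  measurable_fun setT f -> measurable [set w | f w = x].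
Proof.
by move=> mf; have := mf measurableT [set x] (measurable_tuple_set1 x); rewrite setTI.
Qed.

Lemma measurable_fun_eq_tuple n (f : Omega -> n.-tuple T) x :
  measurable_fun setT f -> measurable_fun setT (fun w => f w == x).
Proof.
move=> mf; apply: (measurable_fun_bool true).
rewrite setTI (_ : _ @^-1` _ = [set w | f w = x]); first exact: measurable_eq_tuple.
by apply/seteqP; split => w /= /eqP.
Qed.

End measurable_tuple.

Lemma pre_tnth (alpha : nat -> nat) r (i : 'I_r) : tnth (pre alpha r) i = alpha i.+1.
Proof. exact: tnth_mktuple. Qed.

Lemma pre_eqP (alpha beta : nat -> nat) r :
  pre alpha r = pre beta r <-> (forall i, (i < r)%N -> alpha i.+1 = beta i.+1).
Proof.
split=> [ab i ir | ab].
  by have := congr1 (fun u => tnth u (Ordinal ir)) ab; rewrite !pre_tnth.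
by apply: eq_from_tnth => i; rewrite !pre_tnth ab.
Qed.

Lemma pre_eq_leq {alpha beta : nat -> nat} {r s} :
  (s <= r)%N -> pre alpha r = pre beta r -> pre alpha s = pre beta s.
Proof.
move=> sr /pre_eqP ab; apply/pre_eqP => i is_; apply: ab.
exact: leq_trans is_ sr.
Qed.

Lemma pre_eq_head {alpha beta : nat -> nat} {r} :
  (0 < r)%N -> pre alpha r = pre beta r -> alpha 1%N = beta 1%N.
Proof. by move=> r0 /pre_eqP; apply. Qed.

Lemma traj_eqP (R : eqType) (dims : nat -> nat) (Om Om' : Type)
    (X : forall r, r.-tuple nat -> Om -> (dims r).-tuple R)
    (X' : forall r, r.-tuple nat -> Om' -> (dims r).-tuple R)
    alpha beta w w' t :
  traj X alpha t w = traj X' beta t w' <->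
  (forall r, (r <= t)%N -> X r (pre alpha r) w = X' r (pre beta r) w').
Proof.
elim: t => [|t IH] /=.
  by split=> [XX' r | ]; [rewrite leqn0 => /eqP-> | apply].
split=> [/(congr1 (@tval _ _)) /= /eqP|XX'].
  rewrite eqseq_cat ?size_tuple// => /andP[/eqP/val_inj/IH XX' /eqP/val_inj XX'1] r.
  by rewrite leq_eqVlt => /orP[/eqP->//|]; exact: XX'.
by rewrite XX'// (IH.2 _)// => r rt; apply: XX'; exact: leqW.
Qed.

Section measurable_outcomes.
Context (R : realType) (dims : nat -> nat) d (Omega : measurableType d)
  (X : forall r, r.-tuple nat -> Omega -> (dims r).-tuple R) (A : Omega -> nat -> nat).
Hypothesis mX : forall r (al : r.-tuple nat), measurable_fun setT (X r al).
Hypothesis mA : forall r, measurable_fun setT (fun w => A w r).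

Lemma measurable_fun_traj alpha t : measurable_fun setT (traj X alpha t).
Proof. by elim: t => [|t IH] /=; [exact: mX | exact: measurable_fun_cat_tuple]. Qed.

Lemma measurable_fun_pre k : measurable_fun setT (fun w => pre (A w) k).
Proof.
apply/measurable_fun_tnthP => i.
rewrite (_ : _ \o _ = fun w => A w i.+1); first exact: mA.
by apply/funext => w /=; rewrite pre_tnth.
Qed.

Lemma measurable_realized_outcome_eq s x :
  measurable [set w | X s (pre (A w) s) w = x].
Proof.
rewrite (_ : [set w | _] =
    \bigcup_(al : s.-tuple nat) ([set w | pre (A w) s = al] `&` [set w | X s al w = x])).
  apply: (@countable_bigcupT_measurable _ _ (s.-tuple nat)); first exact: countableP.
  move=> al; apply: measurableI; apply: measurable_eq_tuple => //.
  exact: measurable_fun_pre.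
apply/seteqP; split => [w /= Xw | w [al _ [/= <- //]]].
by exists (pre (A w) s).
Qed.

End measurable_outcomes.

(* The version is the Radon-Nikodym derivative of B |-> E[Y; Z \in B] with respect
   to the law of Z. *)
Section conditional_expectation.
Context {R : realType} {d} {Omega : measurableType d} {P : probability Omega R}
  {dV} {V : measurableType dV} {Z : Omega -> V} {Y : Omega -> R}.
Hypothesis mZ : measurable_fun setT Z.
Hypothesis intY : P.-integrable setT (EFin \o Y).
Local Open Scope ereal_scope.

Let law_Z : probability V R :=
  distribution P (HB.pack Z (isMeasurableFun.Build _ _ _ _ Z mZ)).

(* The charge structure of [pushforward] is only available given [mZ]. *)
Let nu : {charge set V -> \bar R} :=
  ltac:(refine (pushforward (induced_charge intY) Z); exact: mZ).

Let nu_dominated : nu `<< law_Z.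
Proof.
apply: dominates_pushforward => //; apply/null_content_dominatesP => A mA PA0.
by apply: null_set_integral => //; exact: measurable_funS (measurable_int P intY).
Qed.

Let f := Radon_Nikodym nu law_Z.

Let f_fin x : f x \is a fin_num := Radon_Nikodym_fin_num x nu_dominated.

Let integrable_fZ : P.-integrable setT (f \o Z).
Proof.
have /integrableP[mf intf] := Radon_Nikodym_integrable nu_dominated.
apply/integrableP; split; first exact: measurableT_comp mf mZ.
by move: intf; rewrite ge0_integral_pushforward//; exact: measurableT_comp mf.
Qed.

Lemma cexp_version_exists : exists h, cexp_version P Y Z h.
Proof.
have fineK_f : EFin \o ((fine \o f) \o Z) = f \o Z.
  by apply/funext => w /=; rewrite fineK.
exists (fine \o f); split => //.
- exact: measurableT_comp (measurable_int _ (Radon_Nikodym_integrable nu_dominated)).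
- by rewrite fineK_f.
move=> B mB; have mZB : measurable (Z @^-1` B).
  by rewrite -[X in measurable X]setTI; exact: mZ.
transitivity (nu B) => //.
rewrite (Radon_Nikodym_integral nu_dominated mB) integral_pushforward//.
- by apply: eq_integral => w _ /=; rewrite fineK.
- exact: integrableS integrable_fZ.
Qed.

End conditional_expectation.

Section measure_lemmas.
Context {d} {Omega : measurableType d} {R : realType}
  {mu : {measure set Omega -> \bar R}}.
Local Open Scope ereal_scope.

Lemma ae_exists_in {E : set Omega} {Q : Omega -> Prop} :
  measurable E -> 0 < mu E -> {ae mu, forall w, Q w} -> exists2 w, E w & Q w.
Proof.
move=> mE E_gt0 [N [mN N0 QN]]; apply: contrapT => noQE.
suff E0 : mu E = 0 by rewrite E0 ltxx in E_gt0.
apply: subset_measure0 mE mN _ N0 => w Ew; apply: QN => Qw.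
by apply: noQE; exists w.
Qed.

Lemma le_measure_ae (A B : set Omega) : measurable A -> measurable B ->
  {ae mu, forall w, A w -> B w} -> mu A <= mu B.
Proof.
move=> mA mB [N [mN N0 ABN]].
have mAN : measurable (A `&` N) by exact: measurableI.
rewrite (measureDI mu mA mN) (subset_measure0 mAN mN (@subIsetr _ A N) N0) adde0.
apply: le_measure; rewrite ?inE//; first exact: measurableD.
by move=> w [Aw Nw]; apply: contrapT => Bw; apply: Nw; apply: ABN => /(_ Aw).
Qed.

End measure_lemmas.

Lemma cexp_version_atom {R : realType} {d} {Omega : measurableType d}
    {P : probability Omega R} {dV} {V : measurableType dV}
    {Y : Omega -> R} {Z : Omega -> V} {h : V -> R} {z : V} {v : R} :
  measurable_fun setT Z -> measurable [set z] ->
  (0 < P (Z @^-1` [set z]))%E ->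
  ae_eq P (Z @^-1` [set z]) (EFin \o Y) (cst v%:E) ->
  cexp_version P Y Z h -> h z = v.
Proof.
move=> mZ mz Pz_gt0 Yv [_ intY _ /(_ _ mz)].
have mZz : measurable (Z @^-1` [set z]).
  by rewrite -[X in measurable X]setTI; exact: mZ.
rewrite (ae_eq_integral _ _ mZz _ _ Yv); last 2 first.
- exact: measurable_funTS (measurable_int _ intY).
- exact: measurable_cst.
rewrite [X in _ = X -> _](eq_integral (fun=> (h z)%:E)); last first.
  by move=> w; rewrite inE /= => ->.
have PZz_fin : P (Z @^-1` [set z]) \is a fin_num by exact: fin_num_measure.
rewrite !integral_cst// -[X in (_ * X)%E = _ -> _](fineK PZz_fin).
rewrite -[X in _ = (_ * X)%E -> _](fineK PZz_fin) -!EFinM => -[] /mulIf -> //.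
by rewrite gt_eqF// -lte_fin fineK.
Qed.

Section imputed_model.
Context {R : realType} {dims : nat -> nat} {t : nat} {a : nat -> nat}
  {d} {Omega : measurableType d} {P : probability Omega R}
  {X : forall r, r.-tuple nat -> Omega -> (dims r).-tuple R}
  {A : Omega -> nat -> nat} {Y : forall k, k.-tuple nat -> Omega -> R}
  {w0 : Omega} {v : R}.

Local Notation z0 := (traj X a t w0).

(* X_0 carries no action index, so the guard [0 < r] leaves it untouched. *)
Definition imputed_X r (al : r.-tuple nat) w :=
  if [&& (0 < r)%N, A w 1 != a 1 & al == pre a r] then X r al w0 else X r al w.

(* Only Y(a_{1:t}) changes; [val] compares action tuples of different lengths. *)
Definition imputed_Y k (al : k.-tuple nat) w :=
  if [&& val al == val (pre a t), pre (A w) k != al & traj imputed_X a t w == z0]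
  then v else Y k al w.

Lemma traj_imputed_X_switched w : A w 1 != a 1 ->
  X 0 (pre a 0) w = X 0 (pre a 0) w0 -> traj imputed_X a t w = z0.
Proof.
by move=> Aw1 X0w; apply/traj_eqP => -[|r] _; rewrite /imputed_X //= Aw1 eqxx.
Qed.

Lemma traj_imputed_X_stayed w : A w 1 = a 1 -> traj imputed_X a t w = traj X a t w.
Proof. by move=> Aw1; apply/traj_eqP => r _; rewrite /imputed_X Aw1 eqxx andbF. Qed.

Lemma imputed_X_realized w r : imputed_X r (pre (A w) r) w = X r (pre (A w) r) w.
Proof.
rewrite /imputed_X; case: ifP => // /and3P[r_gt0 Aw1 /eqP Aa].
by rewrite (pre_eq_head r_gt0 Aa) eqxx in Aw1.
Qed.

Lemma obs_imputed T : obs imputed_X A imputed_Y T t = obs X A Y T t.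
Proof.
apply/funext => w; rewrite /obs /imputed_Y eqxx andbF; congr (_, _, _).
by apply/traj_eqP => r _; exact: imputed_X_realized.
Qed.

Lemma imputed_YE w : imputed_Y t (pre a t) w =
  if (pre (A w) t != pre a t) && (traj imputed_X a t w == z0)
  then v else Y t (pre a t) w.
Proof. by rewrite /imputed_Y eqxx. Qed.

Hypothesis mXAY : po_measurable X A Y.

Lemma po_measurable_imputed : po_measurable imputed_X A imputed_Y.
Proof.
case: mXAY => mX mA mY.
have mXi r al : measurable_fun setT (imputed_X r al).
  apply: measurable_fun_ifT; [|exact: measurable_cst|exact: mX].
  apply: measurable_and; first exact: measurable_cst.
  apply: measurable_and; last exact: measurable_cst.
  exact: (measurableT_comp (f := fun n => n != a 1)) (mA 1%N).
split=> // k al; apply: measurable_fun_ifT; [|exact: measurable_cst|exact: mY].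
apply: measurable_and; first exact: measurable_cst.
apply: measurable_and.
  exact/measurable_neg/measurable_fun_eq_tuple/measurable_fun_pre.
exact/measurable_fun_eq_tuple/measurable_fun_traj.
Qed.

Lemma integrable_imputed_Y : P.-integrable setT (EFin \o Y t (pre a t)) ->
  P.-integrable setT (EFin \o imputed_Y t (pre a t)).
Proof.
move=> intY; have [_ _ mYi] := po_measurable_imputed.
have intYv := integrableD measurableT (integrable_abse intY)
  (finite_measure_integrable_cst P `|v| measurableT).
apply: (le_integrable measurableT _ _ intYv); first exact: measurableT_comp.
move=> w _ /=; rewrite imputed_YE lee_fin [X in _ <= X]ger0_norm ?addr_ge0//.
by case: ifP => _; [rewrite lerDr | rewrite lerDl].
Qed.

Hypothesis t_gt0 : (0 < t)%N.
Hypothesis X0_const : {ae P, forall w, X 0 (pre a 0) w = X 0 (pre a 0) w0}.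

Lemma imputed_Y_bounds {ylo yup : (dsum dims t).-tuple R -> R} :
  ylo z0 <= v <= yup z0 ->
  {ae P, forall w, ylo (traj X a t w) <= Y t (pre a t) w <= yup (traj X a t w)} ->
  {ae P, forall w, ylo (traj imputed_X a t w) <= imputed_Y t (pre a t) w
                   <= yup (traj imputed_X a t w)}.
Proof.
move=> v_bounds; apply: filterS2 X0_const => w X0w Yw_bounds.
rewrite imputed_YE; case: ifP => [/andP[_ /eqP -> //] | not_imputed].
have [Aw1 | Aw1] := eqVneq (A w 1) (a 1); first by rewrite traj_imputed_X_stayed.
move: not_imputed; rewrite traj_imputed_X_switched// eqxx andbT.
by case: eqP => // /(pre_eq_head t_gt0) /eqP; rewrite (negPf Aw1).
Qed.

Lemma imputed_Y_at_z0 {s} : (1 <= s <= t)%N ->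
  (forall x, P [set w | X s (pre (A w) s) w = x] = 0%E) ->
  ae_eq P (traj imputed_X a t @^-1` [set z0])
    (EFin \o imputed_Y t (pre a t)) (cst v%:E).
Proof.
case: mXAY => mX mA _ /andP[_ st] no_atom.
exists [set w | X s (pre (A w) s) w = X s (pre a s) w0]; split.
- exact: measurable_realized_outcome_eq.
- exact: no_atom.
move=> w /= /not_implyP[z0w]; rewrite imputed_YE z0w eqxx andbT.
case: eqP => [Aa _ | //].
rewrite (pre_eq_leq st Aa).
move: z0w; rewrite traj_imputed_X_stayed ?(pre_eq_head t_gt0 Aa)//.
by move/traj_eqP; apply.
Qed.

Lemma measure_imputed_z0_gt0 : (0 < P [set w | A w 1 != a 1])%E ->
  (0 < P (traj imputed_X a t @^-1` [set z0]))%E.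
Proof.
have [mXi mA _] := po_measurable_imputed.
have mA1 : measurable_fun setT (fun w => A w 1 != a 1).
  exact: (measurableT_comp (f := fun n => n != a 1)) (mA 1%N).
move=> /lt_le_trans; apply; apply: le_measure_ae.
- by have := mA1 measurableT [set true] I; rewrite setTI.
- by apply: measurable_eq_tuple => //; exact: measurable_fun_traj.
by apply: filterS X0_const => w X0w Aw1; exact: traj_imputed_X_switched.
Qed.

Lemma permissible_bounds_at {T} {Aset : nat -> seq nat}
    {ylo yup glo gup : (dsum dims t).-tuple R -> R} {s} :
  actions_in Aset T A ->
  {ae P, forall w, ylo (traj X a t w) <= Y t (pre a t) w <= yup (traj X a t w)} ->
  P.-integrable setT (EFin \o Y t (pre a t)) ->
  (0 < P [set w | A w 1 != a 1])%E ->
  (1 <= s <= t)%N -> (forall x, P [set w | X s (pre (A w) s) w = x] = 0%E) ->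
  permissible T Aset a P X A Y ylo yup glo gup ->
  ylo z0 <= v <= yup z0 -> glo z0 <= v <= gup z0.
Proof.
move=> A_in Y_bounds intY A1_gt0 s_bounds no_atom perm v_bounds.
have mXYi := po_measurable_imputed.
have mtraj : measurable_fun setT (traj imputed_X a t).
  by case: mXYi => mXi _ _; exact: measurable_fun_traj.
have mz0 : measurable [set z0] by apply: measurable_tuple_set1 => //.
have mE : measurable (traj imputed_X a t @^-1` [set z0]).
  by rewrite -[X in measurable X]setTI; exact: mtraj.
have [h h_cexp] := cexp_version_exists mtraj (integrable_imputed_Y intY).
have same_obs : same_law P P (obs X A Y T t) (obs imputed_X A imputed_Y T t).
  by move=> B mB; rewrite obs_imputed.
have := perm _ _ P _ _ _ mXYi A_in same_obs (imputed_Y_bounds v_bounds Y_bounds)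
  h h_cexp.
have E_gt0 := measure_imputed_z0_gt0 A1_gt0.
move=> /(ae_exists_in mE E_gt0) [w /= ->].
by rewrite (cexp_version_atom mtraj mz0 E_gt0 (imputed_Y_at_z0 s_bounds no_atom) h_cexp).
Qed.

End imputed_model.

Theorem theorem4p7 (R : realType) (dims : nat -> nat) (T t : nat)
    (Aset : nat -> seq nat) (a : nat -> nat)
    (d : measure_display) (Omega : measurableType d) (P : probability Omega R)
    (X : forall r, r.-tuple nat -> Omega -> (dims r).-tuple R)
    (A : Omega -> nat -> nat) (Y : forall t, t.-tuple nat -> Omega -> R)
    (ylo yup glo gup : (dsum dims t).-tuple R -> R) :
  (1 <= t <= T)%N ->
  (forall r, (1 <= r <= t)%N -> a r \in Aset r) ->
  po_measurable X A Y ->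
  actions_in Aset T A ->
  measurable_fun setT ylo -> measurable_fun setT yup ->
  {ae P, forall w, ylo (traj X a t w) <= Y t (pre a t) w <= yup (traj X a t w)} ->
  P.-integrable setT (EFin \o Y t (pre a t)) ->
  (exists c, {ae P, forall w, X 0%N (pre a 0) w = c}) ->
  (0 < P [set w | (A w 1 != a 1)%N])%E ->
  (exists s, (1 <= s <= t)%N /\
     forall x : (dims s).-tuple R, P [set w | X s (pre (A w) s) w = x] = 0%E) ->
  measurable_fun setT glo -> measurable_fun setT gup ->
  permissible T Aset a P X A Y ylo yup glo gup ->
  {ae P, forall w, glo (traj X a t w) <= ylo (traj X a t w)} /\
  {ae P, forall w, gup (traj X a t w) >= yup (traj X a t w)}.
Proof.
move=> /andP[t_gt0 _] _ mXAY A_in _ _ Y_bounds intY [c X0_c] A1_gt0.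
move=> [s [s_bounds no_atom]] _ _ perm.
have bounds_at w0 v : X 0 (pre a 0) w0 = c ->
    ylo (traj X a t w0) <= v <= yup (traj X a t w0) ->
    glo (traj X a t w0) <= v <= gup (traj X a t w0).
  move=> X0w0; have X0_const : {ae P, forall w, X 0 (pre a 0) w = X 0 (pre a 0) w0}.
    by apply: filterS X0_c => w ->.
  exact: (permissible_bounds_at mXAY t_gt0 X0_const A_in Y_bounds intY A1_gt0
    s_bounds no_atom perm).
split; apply: filterS2 X0_c Y_bounds => w X0w /andP[lo_Y Y_up].
- have := bounds_at w (ylo (traj X a t w)) X0w.
  by rewrite lexx (le_trans lo_Y Y_up) => /(_ isT) /andP[].
- have := bounds_at w (yup (traj X a t w)) X0w.
  by rewrite lexx (le_trans lo_Y Y_up) => /(_ isT) /andP[].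
Qed.
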